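(* Let $L\subset\mathbb{R}^n$ be an $n$-dimensional lattice and let $P$ be a Delaunay polytope of $L$ with vertex set $V(P)$. Let $$Y(P)=\Big\{y\in\mathbb{Z}^{V(P)}:\ \sum_{v\in V(P)}y(v)v=0,\ \sum_{v\in V(P)}y(v)=0\Big\}.$$ Consider unknowns $d(u,v)$, $u,v\in V(P)$, with $d(u,v)=d(v,u)$ and $d(v,v)=0$. Let $\mathcal{S}_{dist}(P)$ be the system of linear equations $$\sum_{v\in V(P)}y(v)\,d(u,v)=0\qquad\text{for all }y\in Y(P)\text{ and all }u\in V(P),$$ and let $\mathcal{S}_{hyp}(P)$ be the system of all equations $$\sum_{u,v\in V(P)}z(u)z(v)\,d(u,v)=0,\qquad z\in\mathbb{Z}^{V(P)},\ \sum_{v\in V(P)}z(v)=1,$$ that are satisfied by the distance $d_P(u,v)=\|u-v\|^2$. Then the systems $\mathcal{S}_{dist}(P)$ and $\mathcal{S}_{hyp}(P)$ are equivalent, i.e., they have the same solution set.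
   Context: A Delaunay polytope of a lattice $L\subset\mathbb{R}^n$ is a polytope whose vertex set is $L\cap S$, where $S=S(c,r)$ is an empty sphere: $\|a-c\|^2\ge r^2$ for all $a\in L$, and $S\cap L$ contains $n+1$ affinely independent points. *)

From HB Require Import structures.
From mathcomp Require Import all_boot all_order all_algebra.
Set Implicit Arguments. Unset Strict Implicit. Unset Printing Implicit Defensive.
Import Order.TTheory GRing.Theory Num.Theory.
Local Open Scope ring_scope.

Definition sqnorm (R : realFieldType) (n : nat) (x : 'rV[R]_n) : R :=
  \sum_(i < n) x ord0 i ^+ 2.

(* The lattice generated by the rows of B: { z B : z in Z^n }.
   It is n-dimensional when B is invertible. *)
Definition lattice (R : realFieldType) (n : nat) (B : 'M[R]_n) (x : 'rV[R]_n) : Prop :=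
  exists z : 'rV[int]_n, x = map_mx (fun k : int => k%:~R) z *m B.

Definition aff_indep (R : realFieldType) (n : nat) (w : 'I_n.+1 -> 'rV[R]_n) : Prop :=
  row_free (\matrix_(i < n) (w (lift ord0 i) - w ord0)).

(* the sphere S(c,r) is empty for the lattice and meets it in n+1 affinely
   independent points; its vertex set is L ∩ S. *)
Definition delaunay_sphere (R : realFieldType) (n : nat) (B : 'M[R]_n)
    (c : 'rV[R]_n) (r : R) : Prop :=
  (forall a, lattice B a -> r ^+ 2 <= sqnorm (a - c)) /\
  exists w : 'I_n.+1 -> 'rV[R]_n,
    (forall i, lattice B (w i) /\ sqnorm (w i - c) = r ^+ 2) /\ aff_indep w.

Definition in_Y (R : realFieldType) (n m : nat) (v : 'I_m -> 'rV[R]_n)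
    (y : 'I_m -> int) : Prop :=
  \sum_(i < m) (y i)%:~R *: v i = 0 /\ \sum_(i < m) y i = 0.

Definition S_dist (R : realFieldType) (n m : nat) (v : 'I_m -> 'rV[R]_n)
    (d : 'I_m -> 'I_m -> R) : Prop :=
  forall y : 'I_m -> int, in_Y v y ->
    forall u : 'I_m, \sum_(j < m) (y j)%:~R * d u j = 0.

Definition hyp_form (R : realFieldType) (m : nat) (z : 'I_m -> int)
    (d : 'I_m -> 'I_m -> R) : R :=
  \sum_(i < m) \sum_(j < m) ((z i * z j)%:~R * d i j).

Definition S_hyp (R : realFieldType) (n m : nat) (v : 'I_m -> 'rV[R]_n)
    (d : 'I_m -> 'I_m -> R) : Prop :=
  forall z : 'I_m -> int, \sum_(i < m) z i = 1 ->
    hyp_form z (fun i j => sqnorm (v i - v j)) = 0 ->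
    hyp_form z d = 0.

From HB Require Import structures.
From mathcomp Require Import all_boot all_order all_algebra.
From mathcomp Require Import ring.

(* For integer weights z with sum 1 and vertices on the sphere S(c, r),
     sum_(u,v) z(u) z(v) |u - v|^2 = 2 (r^2 - |sum_v z(v) v - c|^2),
   so the equations of S_hyp are those for which sum_v z(v) v lies in L and on
   S, i.e. is a vertex w. Then z - e_w is in Y(P), and S_dist collapses the
   quadratic form to d(w, w) = 0. Conversely, for y in Y(P) and a vertex u both
   e_u + y and e_u - y give equations of S_hyp, and the difference of the two
   is 4 sum_v y(v) d(u, v). *)

Set Implicit Arguments.
Unset Strict Implicit.
Unset Printing Implicit Defensive.
Import Order.TTheory GRing.Theory Num.Theory.
Local Open Scope ring_scope.

Lemma sum_mulrb (V : nmodType) (m : nat) (F : 'I_m -> V) (k : 'I_m) :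
  \sum_i F i *+ (i == k) = F k.
Proof. by under eq_bigr do rewrite mulrb; rewrite -big_mkcond big_pred1_eq. Qed.

Section Forms.
Variables (R : comPzRingType) (m : nat).
Implicit Types (a b x : 'I_m -> R) (d : 'I_m -> 'I_m -> R).

Definition bil_form a b d := \sum_i \sum_j a i * b j * d i j.
Definition quad_form a d := bil_form a a d.

Lemma eq_quad_form a a' d : a =1 a' -> quad_form a d = quad_form a' d.
Proof. by move=> eq_a; apply: eq_bigr => i _; apply: eq_bigr => j _; rewrite !eq_a. Qed.

Lemma bil_formE a b d : bil_form a b d = \sum_i a i * \sum_j b j * d i j.
Proof. by apply: eq_bigr => i _; rewrite mulr_sumr; apply: eq_bigr => j _; ring. Qed.

Lemma bil_form_sum (p : nat) a b (f : 'I_p -> 'I_m -> 'I_m -> R) :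
  bil_form a b (fun i j => \sum_k f k i j) = \sum_k bil_form a b (f k).
Proof.
rewrite exchange_big; apply: eq_bigr => i _.
by rewrite exchange_big; apply: eq_bigr => j _; rewrite mulr_sumr.
Qed.

Lemma quad_formD_sub a b d : (forall i j, d i j = d j i) ->
  quad_form (a \+ b) d - quad_form (a \- b) d = 4%:R * bil_form a b d.
Proof.
move=> dsym; have bilC : bil_form b a d = bil_form a b d.
  rewrite /bil_form exchange_big; apply: eq_bigr => i _.
  by apply: eq_bigr => j _; rewrite dsym; ring.
transitivity (2%:R * bil_form a b d + 2%:R * bil_form b a d); last first.
  by rewrite bilC; ring.
rewrite /quad_form /bil_form !mulr_sumr -big_split -sumrB /=.
apply: eq_bigr => i _; rewrite !mulr_sumr -big_split -sumrB /=.
by apply: eq_bigr => j _; rewrite dsym; ring.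
Qed.

Lemma quad_form_sqr_diff a x :
  quad_form a (fun i j => (x i - x j) ^+ 2) =
  2%:R * (\sum_i a i) * (\sum_i a i * x i ^+ 2) - 2%:R * (\sum_i a i * x i) ^+ 2.
Proof.
set sa := \sum_i a i; set sax := \sum_i a i * x i; set sax2 := \sum_i a i * x i ^+ 2.
have -> : 2%:R * sa * sax2 - 2%:R * sax ^+ 2 = sax2 * sa + sa * sax2 - 2%:R * (sax * sax).
  by ring.
rewrite !big_distrlr -big_split mulr_sumr -sumrB; apply: eq_bigr => i _ /=.
by rewrite -big_split mulr_sumr -sumrB; apply: eq_bigr => j _ /=; ring.
Qed.

End Forms.

Lemma quad_form_sqdist (R : realFieldType) (n m : nat) (a : 'I_m -> R)
    (v : 'I_m -> 'rV[R]_n) (c : 'rV[R]_n) :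
  quad_form a (fun i j => sqnorm (v i - v j)) =
  2%:R * (\sum_i a i) * (\sum_i a i * sqnorm (v i - c))
  - 2%:R * sqnorm (\sum_i a i *: (v i - c)).
Proof.
pose x k i := (v i - c) 0 k.
transitivity (quad_form a (fun i j => \sum_k (x k i - x k j) ^+ 2)).
  apply: eq_bigr => i _; apply: eq_bigr => j _; congr (_ * _).
  by apply: eq_bigr => k _; rewrite /x !mxE opprB addrA subrK.
rewrite /quad_form bil_form_sum.
under eq_bigr do rewrite -/(quad_form _ _) quad_form_sqr_diff.
rewrite sumrB -!mulr_sumr; congr (_ * _ - _ * _).
  by rewrite exchange_big; apply: eq_bigr => i _; rewrite /sqnorm mulr_sumr.
by apply: eq_bigr => k _; rewrite summxE; under [in RHS]eq_bigr do rewrite mxE.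
Qed.

Lemma quad_form_sqdist_sphere (R : realFieldType) (n m : nat) (a : 'I_m -> R)
    (v : 'I_m -> 'rV[R]_n) (c : 'rV[R]_n) (r : R) :
  \sum_i a i = 1 -> (forall i, sqnorm (v i - c) = r ^+ 2) ->
  quad_form a (fun i j => sqnorm (v i - v j)) =
  2%:R * (r ^+ 2 - sqnorm (\sum_i a i *: v i - c)).
Proof.
move=> sum_a onS; rewrite (quad_form_sqdist _ _ c) sum_a.
have -> : \sum_i a i *: (v i - c) = \sum_i a i *: v i - c.
  by under eq_bigr do rewrite scalerBr; rewrite sumrB -scaler_suml sum_a scale1r.
by under eq_bigr do rewrite onS; rewrite -mulr_suml sum_a; ring.
Qed.

Section Lattice.
Variables (R : realFieldType) (n : nat) (B : 'M[R]_n).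

Lemma lattice0 : lattice B 0.
Proof. by exists 0; rewrite (map_mx0 (intmul 1)) mul0mx. Qed.

Lemma latticeD x y : lattice B x -> lattice B y -> lattice B (x + y).
Proof.
move=> [zx ->] [zy ->]; exists (zx + zy); rewrite -mulmxDl; congr (_ *m _).
by apply/matrixP => i j; rewrite !mxE intrD.
Qed.

Lemma latticeZ (k : int) x : lattice B x -> lattice B (k%:~R *: x).
Proof.
move=> [zx ->]; exists (k *: zx); rewrite scalemxAl; congr (_ *m _).
by apply/matrixP => i j; rewrite !mxE intrM.
Qed.

Lemma lattice_sum (m : nat) (z : 'I_m -> int) (v : 'I_m -> 'rV[R]_n) :
  (forall i, lattice B (v i)) -> lattice B (\sum_i (z i)%:~R *: v i).
Proof.
move=> Lv; apply: (big_ind (lattice B)); [exact: lattice0 | exact: latticeD |].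
by move=> i _; apply: latticeZ.
Qed.

End Lattice.

Lemma hyp_formE (R : realFieldType) (m : nat) (z : 'I_m -> int)
    (d : 'I_m -> 'I_m -> R) :
  hyp_form z d = quad_form (fun i => (z i)%:~R) d.
Proof. by apply: eq_bigr => i _; apply: eq_bigr => j _; rewrite rmorphM. Qed.

Section Delaunay.
Variables (R : realFieldType) (n m : nat) (B : 'M[R]_n) (c : 'rV[R]_n) (r : R).
Variables (v : 'I_m -> 'rV[R]_n) (d : 'I_m -> 'I_m -> R).
Hypothesis vertexP :
  forall a, (exists i, v i = a) <-> (lattice B a /\ sqnorm (a - c) = r ^+ 2).
Hypothesis dsym : forall i j, d i j = d j i.

Let vertex_on_sphere i : sqnorm (v i - c) = r ^+ 2.
Proof. by have [] := (vertexP (v i)).1 (ex_intro _ i erefl). Qed.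

Let vertex_in_lattice i : lattice B (v i).
Proof. by have [] := (vertexP (v i)).1 (ex_intro _ i erefl). Qed.

Lemma hyp_form_sqdist (z : 'I_m -> int) : \sum_i z i = 1 ->
  hyp_form z (fun i j => sqnorm (v i - v j)) =
  2%:R * (r ^+ 2 - sqnorm (\sum_i (z i)%:~R *: v i - c)).
Proof.
move=> sum_z; rewrite hyp_formE (quad_form_sqdist_sphere _ vertex_on_sphere) //.
by rewrite -rmorph_sum sum_z.
Qed.

Lemma hyp_form_sqdist_eq0_vertex (z : 'I_m -> int) : \sum_i z i = 1 ->
  hyp_form z (fun i j => sqnorm (v i - v j)) = 0 ->
  exists k, v k = \sum_i (z i)%:~R *: v i.
Proof.
move=> sum_z; rewrite hyp_form_sqdist // => /eqP.
rewrite mulf_eq0 pnatr_eq0 /= subr_eq0 => /eqP onS.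
by apply/vertexP; split; [exact: lattice_sum | rewrite onS].
Qed.

Lemma S_dist_affine_comb (z : 'I_m -> int) (k : 'I_m) :
  S_dist v d -> \sum_i z i = 1 -> v k = \sum_i (z i)%:~R *: v i ->
  forall u, \sum_j (z j)%:~R * d u j = d u k.
Proof.
move=> Sd sum_z vk u.
have Yy : in_Y v (fun i => z i - 1 *+ (i == k)).
  split; last by rewrite sumrB sum_z (sum_mulrb (fun=> 1)) subrr.
  under eq_bigr do rewrite rmorphB rmorphMn rmorph1 scalerBl scaler_nat.
  by rewrite sumrB sum_mulrb vk subrr.
have := Sd _ Yy u.
under eq_bigr do rewrite rmorphB rmorphMn rmorph1 mulrBl mulr_natl.
by rewrite sumrB sum_mulrb => /eqP; rewrite subr_eq0 => /eqP.
Qed.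

Lemma S_dist_S_hyp : (forall i, d i i = 0) -> S_dist v d -> S_hyp v d.
Proof.
move=> d0 Sd z sum_z /(hyp_form_sqdist_eq0_vertex sum_z) [k vk].
have comb := S_dist_affine_comb Sd sum_z vk.
rewrite hyp_formE /quad_form bil_formE /=.
by under eq_bigr do rewrite comb dsym; rewrite comb d0.
Qed.

Lemma S_hyp_shift (y : 'I_m -> int) (u : 'I_m) (t : int) :
  S_hyp v d -> in_Y v y -> hyp_form (fun i => 1 *+ (i == u) + t * y i) d = 0.
Proof.
move=> Sh [Yv Y1].
have sum_z : \sum_i (1 *+ (i == u) + t * y i) = 1.
  by rewrite big_split /= sum_mulrb -mulr_sumr Y1 mulr0 addr0.
apply: (Sh _ sum_z); rewrite (hyp_form_sqdist sum_z).
under eq_bigr do rewrite rmorphD rmorphMn rmorph1 rmorphM scalerDl scaler_nat -scalerA.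
by rewrite big_split /= sum_mulrb -scaler_sumr Yv scaler0 addr0 vertex_on_sphere subrr mulr0.
Qed.

Lemma S_hyp_S_dist : S_hyp v d -> S_dist v d.
Proof.
move=> Sh y Yy u.
pose a i : R := 1 *+ (i == u); pose b i : R := (y i)%:~R.
have shift t : quad_form (fun i => a i + t%:~R * b i) d = 0.
  rewrite -(S_hyp_shift u t Sh Yy) hyp_formE; apply: eq_quad_form => i.
  by rewrite rmorphD rmorphMn rmorph1 rmorphM.
have : quad_form (a \+ b) d - quad_form (a \- b) d = 0.
  rewrite (eq_quad_form _ (_ : a \+ b =1 fun i => a i + 1%:~R * b i)); last first.
    by move=> i /=; rewrite mul1r.
  rewrite (eq_quad_form _ (_ : a \- b =1 fun i => a i + (-1)%:~R * b i)); last first.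
    by move=> i /=; rewrite mulN1r.
  by rewrite !shift subrr.
rewrite quad_formD_sub // bil_formE.
under eq_bigr do rewrite mulr_natl.
by rewrite sum_mulrb => /eqP; rewrite mulf_eq0 pnatr_eq0 /= => /eqP.
Qed.

End Delaunay.

Theorem lemma2 (R : realFieldType) (n : nat) (B : 'M[R]_n) (c : 'rV[R]_n) (r : R)
    (m : nat) (v : 'I_m -> 'rV[R]_n) :
  B \in unitmx ->
  delaunay_sphere B c r ->
  injective v ->
  (forall a : 'rV[R]_n,
      (exists i, v i = a) <-> (lattice B a /\ sqnorm (a - c) = r ^+ 2)) ->
  forall d : 'I_m -> 'I_m -> R,
    (forall i j, d i j = d j i) -> (forall i, d i i = 0) ->
    (S_dist v d <-> S_hyp v d).
Proof.
(* Only the description of the vertex set as L ∩ S is needed. *)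
move=> _ _ _ vertexP d dsym d0.
split; [exact: S_dist_S_hyp | exact: S_hyp_S_dist].
Qed.
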